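(* Let $M$ be a Baire space, $\mathcal{B}(M)$ its Borel $\sigma$-algebra, $\mathcal{I}_1\subseteq\mathcal{B}(M)$ the $\sigma$-ideal of meagre Borel sets, and $\mathcal{Q}^2(\mathcal{B}(M)):=\{\mathfrak{C}\in\mathcal{Q}(\mathcal{B}(M)):\mathfrak{C}\cap\mathcal{I}_1=\emptyset\}$ with the subspace topology. For $\mathfrak{B}\in\mathcal{Q}(\mathcal{T}(M))$ put $\mathfrak{C}(\mathfrak{B}):=\{A\in\mathcal{B}(M): \exists U\in\mathfrak{B} \text{ with } A\,\triangle\,U\in\mathcal{I}_1\}$. Then $\mathfrak{C}(\mathfrak{B})\in\mathcal{Q}^2(\mathcal{B}(M))$, and $\pi_M:\mathcal{Q}(\mathcal{T}(M))\to\mathcal{Q}^2(\mathcal{B}(M))$, $\mathfrak{B}\mapsto\mathfrak{C}(\mathfrak{B})$, is a homeomorphism.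
   Context: $\mathcal{T}(M)$ is the lattice of open subsets of $M$ (join union, meet intersection). A Baire space is a space in which no nonempty open set is meagre (a countable union of nowhere dense sets). A quasipoint in a lattice $\mathbb{L}$ with least element $0$ is a maximal (w.r.t. inclusion) subset $\mathfrak{B}\subseteq\mathbb{L}$ such that $\mathfrak{B}\neq\emptyset$, $0\notin\mathfrak{B}$, and for all $a,b\in\mathfrak{B}$ there is $c\in\mathfrak{B}$ with $c\le a\wedge b$. $\mathcal{Q}(\mathbb{L})$ denotes the set of quasipoints; for $a\in\mathbb{L}$ put $\mathcal{Q}_a(\mathbb{L})=\{\mathfrak{B}\in\mathcal{Q}(\mathbb{L}) : a\in\mathfrak{B}\}$. The Stone spectrum is $\mathcal{Q}(\mathbb{L})$ with the topology having the sets $\mathcal{Q}_a(\mathbb{L})$ as a basis. *)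

From HB Require Import structures.
From mathcomp Require Import all_boot all_order.
From mathcomp Require Import all_classical topology measure.

Unset Implicit Arguments.
Unset Strict Implicit.
Unset Printing Implicit Defensive.

Local Open Scope classical_set_scope.

(* Both lattices of the paper used here (the open sets T(M) and the Borel
   sets B(M)) are lattices of subsets of M, ordered by inclusion, with meet
   = intersection and least element = the empty set. *)

Definition lat_filter_base {T : Type} (L B : set (set T)) : Prop :=
  [/\ B `<=` L, B !=set0, ~ B set0 &
      forall a b, B a -> B b -> exists2 c, B c & c `<=` a `&` b].

Definition quasipoint {T : Type} (L B : set (set T)) : Prop :=
  lat_filter_base L B /\
  forall B', lat_filter_base L B' -> B `<=` B' -> B' = B.

Definition quasipoints {T : Type} (L : set (set T)) : set (set (set T)) :=
  [set B | quasipoint L B].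

Definition quasipoints_at {T : Type} (L : set (set T)) (a : set T)
  : set (set (set T)) := [set B | quasipoint L B /\ B a].

Definition stone_open {T : Type} (L : set (set T)) (S : set (set (set T)))
  : Prop :=
  exists2 F : set (set T), F `<=` L & S = \bigcup_(a in F) quasipoints_at L a.

Definition stone_subspace_open {T : Type} (L : set (set T))
  (Y S : set (set (set T))) : Prop :=
  exists2 O, stone_open L O & S = O `&` Y.

Definition nowhere_dense {M : topologicalType} (A : set M) : Prop :=
  interior (closure A) = set0.

Definition meagre {M : topologicalType} (A : set M) : Prop :=
  exists F : nat -> set M,
    (forall n, nowhere_dense (F n)) /\ A = \bigcup_n F n.

Definition baire_space (M : topologicalType) : Prop :=
  forall U : set M, open U -> U !=set0 -> ~ meagre U.

Definition opens (M : topologicalType) : set (set M) := [set U | open U].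

Definition borel (M : topologicalType) : set (set M) := smallest (sigma_algebra setT) (opens M).

Definition meagre_borel (M : topologicalType) : set (set M) :=
  [set A | borel M A /\ meagre A].

Definition Q2 (M : topologicalType) : set (set (set M)) :=
  [set C | quasipoint (borel M) C /\ C `&` meagre_borel M = set0].

Definition symdiff {T : Type} (A B : set T) : set T := (A `\` B) `|` (B `\` A).

Definition frakC (M : topologicalType) (B : set (set M)) : set (set M) :=
  [set A | borel M A /\ exists2 U, B U & meagre_borel M (symdiff A U)].

From HB Require Import structures.
From mathcomp Require Import all_boot all_order.
From mathcomp Require Import all_classical topology measure.

(* Every Borel set differs from an open set by a meagre set.  Hence a
   quasipoint B of open sets spreads, through meagre differences, to a filter
   base C(B) of Borel sets; the Baire hypothesis keeps the empty set out of
   it, it contains no meagre set because the complement of a meagre set is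
   meagrely close to M and so lies in C(B), and it is maximal because an open
   set outside B is disjoint from a member of B.  Conversely a meagre-free
   quasipoint C of Borel sets restricts to the quasipoint C ∩ T(M) of open
   sets, from which it is recovered.  As an open set belongs to C(B) iff it
   belongs to B, pi_M maps the basic set Q_U(T(M)) onto Q_U(B(M)) ∩ Q^2, and
   the preimage of Q_A(B(M)) is the union of the Q_U(T(M)) over the open sets
   U meagrely close to A. *)

Local Open Scope classical_set_scope.

Section SymmetricDifference.
Context {T : Type}.
Implicit Types A B C D : set T.

Lemma symdiffC A B : symdiff A B = symdiff B A.
Proof. by rewrite /symdiff setUC. Qed.

Lemma symdiffxx A : symdiff A A = set0.
Proof. by rewrite /symdiff setDv setU0. Qed.

Lemma symdiff0l A : symdiff set0 A = A.
Proof. by rewrite /symdiff set0D setD0 set0U. Qed.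

Lemma symdiffCC A B : symdiff (~` A) (~` B) = symdiff A B.
Proof. by rewrite /symdiff !setDE !setCK setUC [~` A `&` _]setIC [~` B `&` _]setIC. Qed.

Lemma symdiff_trans A B C : symdiff A C `<=` symdiff A B `|` symdiff B C.
Proof.
move=> x [[Ax nCx]|[Cx nAx]]; have [Bx|nBx] := pselect (B x).
- by right; left.
- by left; left.
- by left; right.
- by right; right.
Qed.

Lemma symdiffI A B C D :
  symdiff (A `&` B) (C `&` D) `<=` symdiff A C `|` symdiff B D.
Proof.
move=> x [[[Ax Bx] nCD]|[[Cx Dx] nAB]].
- have [Cx|nCx] := pselect (C x); last by left; left.
  by right; left; split=> // Dx; apply: nCD.
- have [Ax|nAx] := pselect (A x); last by left; right.
  by right; right; split=> // Bx; apply: nAB.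
Qed.

End SymmetricDifference.

Section Meagre.
Context {M : topologicalType}.
Implicit Types A B F : set M.

Lemma nowhere_denseS A B : A `<=` B -> nowhere_dense B -> nowhere_dense A.
Proof.
move=> AB ndB; apply/seteqP; split=> // x intAx.
by rewrite -ndB; exact: interiorS (closureS AB) _ intAx.
Qed.

Lemma nowhere_dense0 : nowhere_dense (@set0 M).
Proof. by rewrite /nowhere_dense closure0 interior0. Qed.

Lemma closed_nowhere_dense_setD_interior F :
  closed F -> nowhere_dense (F `\` F°).
Proof.
move=> cF; have cN : closed (F `\` F°).
  by rewrite setDE; apply: closedI => //; rewrite closedC; exact: open_interior.
rewrite /nowhere_dense -(closure_id _).1 //; apply/seteqP; split=> // x intNx.
have [_] := interior_subset intNx; apply.
by apply: interiorS intNx => y [].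
Qed.

Lemma meagreS {A B} : A `<=` B -> meagre B -> meagre A.
Proof.
move=> AB [G [ndG eB]]; subst B; exists (fun n => G n `&` A); split.
  by move=> n; apply: nowhere_denseS (ndG n); exact: subIsetl.
apply/seteqP; split=> [x Ax|x [n _ []] //].
by have [n _ Gnx] := AB x Ax; exists n.
Qed.

Lemma meagre_nowhere_dense A : nowhere_dense A -> meagre A.
Proof.
move=> ndA; exists (fun=> A); split=> //.
by apply/seteqP; split=> [x Ax|x [] //]; exists 0.
Qed.

Lemma meagre0 : meagre (@set0 M).
Proof. exact/meagre_nowhere_dense/nowhere_dense0. Qed.

Lemma meagre_bigcup (A : nat -> set M) :
  (forall n, meagre (A n)) -> meagre (\bigcup_n A n).
Proof.
move=> /choice[G HG].
pose H k := if unpickle k is Some (n, m) then G n m else set0.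
exists H; split.
  move=> k; rewrite /H; case: (unpickle k) => [[n m]|]; last exact: nowhere_dense0.
  exact: (HG n).1.
apply/seteqP; split=> [x [n _]|x [k _]].
  rewrite (HG n).2 => -[m _ Gx].
  by exists (pickle (n, m)) => //; rewrite /H pickleK.
rewrite /H; case: (unpickle k) => [[n m]|] // Gx.
by exists n => //; rewrite (HG n).2; exists m.
Qed.

Lemma meagreU {A B} : meagre A -> meagre B -> meagre (A `|` B).
Proof.
move=> mA mB; rewrite -bigcup2E; apply: meagre_bigcup => -[|[|n]] //=.
exact: meagre0.
Qed.

End Meagre.

Section Borel.
Context {M : topologicalType}.
Implicit Types A B U : set M.

Lemma borel_open {U} : open U -> borel M U.
Proof. exact: sub_sigma_algebra. Qed.

Lemma borel0 : borel M set0.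
Proof. exact: sigma_algebra0. Qed.

Lemma borelT : borel M setT.
Proof. exact: borel_open openT. Qed.

Lemma borelC {A} : borel M A -> borel M (~` A).
Proof. by rewrite -setTD; exact: sigma_algebraCD. Qed.

Lemma borelU {A B} : borel M A -> borel M B -> borel M (A `|` B).
Proof.
move=> bA bB; rewrite -bigcup2E; apply: sigma_algebra_bigcup => -[|[|n]] //=.
exact: borel0.
Qed.

Lemma borelI : setI_closed (borel M).
Proof.
move=> A B bA bB; rewrite -[_ `&` _]setCK setCI.
by apply: borelC; apply: borelU; exact: borelC.
Qed.

Lemma borel_symdiff {A B} : borel M A -> borel M B -> borel M (symdiff A B).
Proof.
by move=> bA bB; apply: borelU; rewrite setDE; apply: borelI => //; exact: borelC.
Qed.

Definition has_baire_property A := exists2 U, open U & meagre (symdiff A U).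

Lemma has_baire_propertyC A : has_baire_property A -> has_baire_property (~` A).
Proof.
move=> [U oU mAU]; exists (~` U)°; first exact: open_interior.
apply: meagreS (symdiff_trans _ (~` U) _) _; apply: meagreU; first by rewrite symdiffCC.
apply: (meagreS (B := ~` U `\` (~` U)°)).
  by move=> x [//|[/interior_subset]].
by apply/meagre_nowhere_dense/closed_nowhere_dense_setD_interior; rewrite closedC.
Qed.

Lemma has_baire_property_bigcup (A : nat -> set M) :
  (forall n, has_baire_property (A n)) -> has_baire_property (\bigcup_n A n).
Proof.
move=> HA; have /choice[U HU] : forall n, exists U, open U /\ meagre (symdiff (A n) U).
  by move=> n; have [U oU mU] := HA n; exists U.
exists (\bigcup_n U n).
  by apply: bigcup_open => n _; exact: (HU n).1.
apply: (meagreS (B := \bigcup_n symdiff (A n) (U n))); last first.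
  by apply: meagre_bigcup => n; exact: (HU n).2.
move=> x [[[n _ Ax] nUx]|[[n _ Ux] nAx]]; exists n => //.
- by left; split=> // Ux; apply: nUx; exists n.
- by right; split=> // Ax; apply: nAx; exists n.
Qed.

Lemma borel_has_baire_property {A} : borel M A -> has_baire_property A.
Proof.
apply: smallest_sub => [|U oU]; last first.
  by exists U => //; rewrite symdiffxx; exact: meagre0.
split.
- by exists set0; [exact: open0 | rewrite symdiffxx; exact: meagre0].
- by move=> B; rewrite setTD; exact: has_baire_propertyC.
- exact: has_baire_property_bigcup.
Qed.

End Borel.

Lemma lat_filter_base_setC {T : Type} (L F : set (set T)) c :
  lat_filter_base L F -> F c -> ~ F (~` c).
Proof.
move=> [_ _ nF0 Fmeet] Fc Fnc; have [d Fd dc] := Fmeet _ _ Fc Fnc.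
apply: nF0; suff <- : d = set0 by []; by rewrite -subset0 => x /dc[].
Qed.

Section Quasipoint.
Context {T : Type} {L : set (set T)} (LI : setI_closed L).
Context {B : set (set T)} (qB : quasipoint L B).
Implicit Types a b : set T.

Lemma quasipoint_sub : B `<=` L.
Proof. by case: qB => -[]. Qed.

Lemma quasipoint_neq0 {a} : B a -> a !=set0.
Proof.
by case: qB => -[_ _ nB0 _] _ Ba; apply/set0P/eqP => a0; apply: nB0; rewrite -a0.
Qed.

(* The members of L containing some a `&` b with b in B form a filter base
   (a meets every b) containing B and a; maximality of B does the rest. *)
Lemma quasipoint_meets_mem a :
  L a -> (forall b, B b -> a `&` b !=set0) -> B a.
Proof.
move=> La meets; have [[BL [b0 Bb0] _ Bmeet] maxB] := qB.
pose B' := [set c | L c /\ exists2 b, B b & a `&` b `<=` c].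
have fB' : lat_filter_base L B'.
  split.
  - by move=> c [].
  - by exists (a `&` b0); split; [exact: LI _ _ La (BL _ Bb0) | exists b0].
  - by case=> _ [b Bb ab0]; have [x abx] := meets b Bb; exact: ab0 x abx.
  - move=> c1 c2 [_ [b1 Bb1 s1]] [_ [b2 Bb2 s2]].
    have [b3 Bb3 s3] := Bmeet _ _ Bb1 Bb2.
    exists (a `&` b3); first by split; [exact: LI _ _ La (BL _ Bb3) | exists b3].
    by move=> x [ax /s3[b1x b2x]]; split; [exact: s1 | exact: s2].
have BB' : B `<=` B'.
  by move=> b Bb; split; [exact: BL | exists b => //; exact: subIsetr].
by rewrite -(maxB _ fB' BB'); split=> //; exists b0 => //; exact: subIsetl.
Qed.

Lemma quasipoint_disjoint {a} : L a -> ~ B a -> exists2 b, B b & a `&` b = set0.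
Proof.
move=> La nBa; apply: contrapT => nodisj; apply/nBa/quasipoint_meets_mem => // b Bb.
by apply/set0P/eqP => ab0; apply: nodisj; exists b.
Qed.

Lemma quasipoint_up {a b} : B b -> L a -> b `<=` a -> B a.
Proof.
move=> Bb La ba; apply: quasipoint_meets_mem => // b' Bb'.
have [[_ _ _ Bmeet] _] := qB; have [c Bc cbb'] := Bmeet _ _ Bb Bb'.
have [x cx] := quasipoint_neq0 Bc; have [bx b'x] := cbb' x cx.
by exists x; split=> //; exact: ba.
Qed.

Lemma quasipoint_setI {a b} : B a -> B b -> B (a `&` b).
Proof.
move=> Ba Bb; have [[_ _ _ Bmeet] _] := qB; have [c Bc cab] := Bmeet _ _ Ba Bb.
exact: quasipoint_up Bc (LI _ _ (quasipoint_sub _ Ba) (quasipoint_sub _ Bb)) cab.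
Qed.

Lemma quasipoint_setT : L setT -> B setT.
Proof. by move=> LT; have [[_ [b Bb] _ _] _] := qB; exact: quasipoint_up Bb LT _. Qed.

Lemma quasipoint_setC {a} : L a -> L (~` a) -> ~ B a -> B (~` a).
Proof.
move=> La Lca nBa; have [b Bb ab0] := quasipoint_disjoint La nBa.
by apply: quasipoint_up Bb Lca _; rewrite -disjoints_subset setIC.
Qed.

End Quasipoint.

Section BaireStoneSpectrum.
Context {M : topologicalType} (M_baire : baire_space M).
Implicit Types (A U V : set M) (B C : set (set M)).

Lemma opensI : setI_closed (opens M).
Proof. by move=> U V; exact: openI. Qed.

Lemma frakC_sub {B} : quasipoint (opens M) B -> B `<=` frakC M B.
Proof.
move=> qB U BU; have oU : open U := quasipoint_sub qB _ BU.
split; first exact: borel_open.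
by exists U => //; rewrite symdiffxx; split; [exact: borel0 | exact: meagre0].
Qed.

Lemma frakC_setC_meagre {B c} :
  quasipoint (opens M) B -> meagre_borel M c -> frakC M B (~` c).
Proof.
move=> qB [bc mc]; split; first exact: borelC.
exists setT; first exact: (quasipoint_setT opensI qB openT).
by rewrite -setC0 symdiffCC symdiffC symdiff0l.
Qed.

Lemma frakC_filter_base {B} :
  quasipoint (opens M) B -> lat_filter_base (borel M) (frakC M B).
Proof.
move=> qB; split.
- by move=> A [].
- by exists setT; exact: frakC_sub qB _ (quasipoint_setT opensI qB openT).
- case=> _ [U BU [_]]; rewrite symdiff0l.
  exact: M_baire _ (quasipoint_sub qB _ BU) (quasipoint_neq0 qB BU).
- move=> A1 A2 [bA1 [U1 BU1 [_ m1]]] [bA2 [U2 BU2 [_ m2]]].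
  have BU12 := quasipoint_setI opensI qB BU1 BU2.
  exists (A1 `&` A2) => //; split; first exact: borelI.
  exists (U1 `&` U2) => //; split.
    apply: borel_symdiff; first exact: borelI.
    exact: borel_open (quasipoint_sub qB _ BU12).
  exact: meagreS (symdiffI _ _ _ _) (meagreU m1 m2).
Qed.

Lemma filter_base_frakC_not_meagre {B C c} :
  quasipoint (opens M) B -> lat_filter_base (borel M) C -> frakC M B `<=` C ->
  C c -> ~ meagre_borel M c.
Proof.
move=> qB fC BC Cc mc.
exact: lat_filter_base_setC fC Cc (BC _ (frakC_setC_meagre qB mc)).
Qed.

(* An open approximation V of A outside B is disjoint from some U in B, so a
   member of C below A `&` U would be meagre. *)
Lemma frakC_quasipoint {B} :
  quasipoint (opens M) B -> quasipoint (borel M) (frakC M B).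
Proof.
move=> qB; split; first exact: frakC_filter_base.
move=> C fC BC; apply/seteqP; split=> [A CA|]; last exact: BC.
have [CL _ _ Cmeet] := fC; have bA := CL _ CA.
have [V oV mAV] := borel_has_baire_property bA.
have [BV|nBV] := pselect (B V).
  by split=> //; exists V => //; split=> //; exact: borel_symdiff bA (borel_open oV).
have [U BU VU0] := quasipoint_disjoint opensI qB oV nBV.
have [c Cc cAU] := Cmeet _ _ CA (BC _ (frakC_sub qB _ BU)).
exfalso; apply: (filter_base_frakC_not_meagre qB fC BC Cc); split; first exact: CL.
apply: meagreS mAV => x /cAU[Ax Ux]; left; split=> // Vx.
by have : (V `&` U) x by []; rewrite VU0.
Qed.

Lemma frakC_Q2 {B} : quasipoint (opens M) B -> Q2 M (frakC M B).
Proof.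
move=> qB; split; first exact: frakC_quasipoint.
apply/seteqP; split=> // c [Cc].
exact: filter_base_frakC_not_meagre qB (frakC_filter_base qB) (@subset_refl _ _) Cc.
Qed.

Lemma frakC_opens {B} : quasipoint (opens M) B -> frakC M B `&` opens M = B.
Proof.
move=> qB; apply/seteqP; split=> [U [CU oU]|U BU]; last first.
  by split; [exact: frakC_sub | exact: quasipoint_sub qB _ BU].
apply: contrapT => nBU; have [W BW UW0] := quasipoint_disjoint opensI qB oU nBU.
have qC := frakC_quasipoint qB.
have := quasipoint_setI borelI qC CU (frakC_sub qB _ BW); rewrite UW0.
by move=> /(quasipoint_neq0 qC)[].
Qed.

Lemma Q2_symdiff_meagre {C A X} :
  Q2 M C -> C A -> borel M X -> meagre (symdiff A X) -> C X.
Proof.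
move=> [qC meagre_free] CA bX mAX; apply: contrapT => nCX.
have CAX := quasipoint_setI borelI qC CA (quasipoint_setC borelI qC bX (borelC bX) nCX).
have : (C `&` meagre_borel M) (A `&` ~` X).
  split=> //; split; first exact: quasipoint_sub qC _ CAX.
  by apply: meagreS mAX => x [Ax nXx]; left.
by rewrite meagre_free.
Qed.

Lemma Q2_opens_quasipoint {C} : Q2 M C -> quasipoint (opens M) (C `&` opens M).
Proof.
move=> Q2C; have [qC _] := Q2C; split.
  split.
  - by move=> U [].
  - by exists setT; split; [exact: (quasipoint_setT borelI qC borelT) | exact: openT].
  - by case=> /(quasipoint_neq0 qC)[].
  - move=> U V [CU oU] [CV oV]; exists (U `&` V) => //.
    by split; [exact: (quasipoint_setI borelI qC CU CV) | exact: openI].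
move=> B' [B'L _ nB'0 B'meet] CB'; apply/seteqP; split=> [V B'V|]; last exact: CB'.
have oV : open V := B'L _ B'V; split=> //; apply: contrapT => nCV.
(* ~` V lies in C and is meagrely close to an open W, which then lies in C
   too; a member of B' below V `&` W would be a nonempty open meagre set. *)
have CnV := quasipoint_setC borelI qC (borel_open oV) (borelC (borel_open oV)) nCV.
have [W oW mW] := borel_has_baire_property (borelC (borel_open oV)).
have B'W := CB' W (conj (Q2_symdiff_meagre Q2C CnV (borel_open oW) mW) oW).
have [c B'c cVW] := B'meet _ _ B'V B'W.
apply: (M_baire c (B'L _ B'c)).
  by apply/set0P/eqP => c0; apply: nB'0; rewrite -c0.
by apply: meagreS mW => x /cVW[Vx Wx]; right; split=> // /(_ Vx).
Qed.

Lemma frakC_Q2_opens {C} : Q2 M C -> frakC M (C `&` opens M) = C.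
Proof.
move=> Q2C; have [[fC _] _] := Q2C.
have [_ maxC] := frakC_quasipoint (Q2_opens_quasipoint Q2C).
apply/esym/maxC => // A [bA [U [CU oU] [_ mAU]]].
by apply: Q2_symdiff_meagre Q2C CU bA _; rewrite symdiffC.
Qed.

Lemma frakC_preimage_open S :
  stone_subspace_open (borel M) (Q2 M) S ->
  stone_open (opens M) (quasipoints (opens M) `&` frakC M @^-1` S).
Proof.
move=> [_ [F FL ->] ->].
exists [set U | open U /\ exists2 a, F a & meagre_borel M (symdiff a U)].
  by move=> U [].
apply/seteqP; split=> [B [qB [[a Fa [_ [_ [U BU mU]]]] _]]|].
  by exists U => //; split; [exact: quasipoint_sub qB _ BU | exists a].
move=> B [U [oU [a Fa mU]] [qB BU]].
have Q2C := frakC_Q2 qB; split=> //; split=> //; exists a => //.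
by split; [exact: Q2C.1 | split; [exact: FL | exists U]].
Qed.

Lemma frakC_image_open S :
  stone_open (opens M) S -> stone_subspace_open (borel M) (Q2 M) (frakC M @` S).
Proof.
move=> [F FL ->]; exists (\bigcup_(a in F) quasipoints_at (borel M) a).
  by exists F => // a /FL; exact: borel_open.
apply/seteqP; split=> [_ [B [a Fa [qB Ba]] <-]|C [[a Fa [qC Ca]] Q2C]].
  have Q2C := frakC_Q2 qB; split=> //; exists a => //.
  by split; [exact: Q2C.1 | exact: frakC_sub].
exists (C `&` opens M); last exact: frakC_Q2_opens.
by exists a => //; split; [exact: Q2_opens_quasipoint | split=> //; exact: FL].
Qed.

End BaireStoneSpectrum.

Theorem proposition3p43 (M : topologicalType) :
  baire_space M ->
  (forall B, quasipoints (opens M) B -> Q2 M (frakC M B)) /\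
  (forall B1 B2, quasipoints (opens M) B1 -> quasipoints (opens M) B2 ->
     frakC M B1 = frakC M B2 -> B1 = B2) /\
  (forall C, Q2 M C -> exists2 B, quasipoints (opens M) B & frakC M B = C) /\
  (forall S, stone_subspace_open (borel M) (Q2 M) S ->
     stone_open (opens M) (quasipoints (opens M) `&` (frakC M) @^-1` S)) /\
  (forall S, stone_open (opens M) S ->
     stone_subspace_open (borel M) (Q2 M) ((frakC M) @` S)).
Proof.
move=> M_baire; split; first by move=> B; exact: frakC_Q2.
split.
  move=> B1 B2 qB1 qB2 C12.
  by rewrite -(frakC_opens M_baire qB1) C12 (frakC_opens M_baire qB2).
split.
  move=> C Q2C; exists (C `&` opens M); first exact: Q2_opens_quasipoint.
  exact: frakC_Q2_opens.
by split; [exact: frakC_preimage_open | exact: frakC_image_open].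
Qed.
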